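(* Let $r>1$. The Danilov fan $\Sigma(r,1)$ is obtained from the cone $\Delta(r,1)$ by successive weighted blow-ups (star subdivisions) at the rays through $p_{r-1},p_{r-2},\dots,p_1$, in this order. The Danilov fan $\Sigma(r,r-1)$ is obtained from $\Delta(r,r-1)$ by successive weighted blow-ups at the rays through $p_1,p_2,\dots,p_{r-1}$, in this order.
   Context: Notation: for integers $s$ and $t>0$, $\langle s\rangle_t$ is the least non-negative integer congruent to $s$ modulo $t$. A pair of integers $(r,a)$ is admissible if $r\ge1$, $0\le a<r$, $\gcd(r,a)=1$ (so $a=0$ only for $r=1$). For admissible $(r,a)$ put $N(r,a)=\mathbb Z^3+\mathbb Z\cdot\frac1r(1,a,r-a)\subset\mathbb Q^3$; $e_1,e_2,e_3$ is the standard basis and $\Delta(r,a)$ the cone spanned by $e_1,e_2,e_3$ (its toric variety is the singularity $\frac1r(1,a,r-a)$). Let $b$ be an inverse of $a$ modulo $r$ and $p_i=\frac1r(\langle -ib\rangle_r,r-i,i)$, $i=0,\dots,r$ (so $p_0=e_2$, $p_r=e_3$, $p_{r-a}=\frac1r(1,a,r-a)$). For $r>1$ let $(r_L,a_L)=(r-a,\langle r\rangle_{r-a})$, $(r_R,a_R)=(a,\langle -r\rangle_a)$; there are lattice isomorphisms $L:N(r_L,a_L)\to N(r,a)$, $R:N(r_R,a_R)\to N(r,a)$ with $L(e_1)=e_1$, $L(e_2)=e_2$, $L(e_3)=p_{r-a}$, $R(e_1)=e_1$, $R(e_2)=p_{r-a}$, $R(e_3)=e_3$. The Danilov fan $\Sigma(r,a)$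 is defined recursively: $\Sigma(1,0)$ is $\Delta(1,0)$ with its faces; for $r>1$, $\Sigma(r,a)$ consists of the cone spanned by $e_2,e_3,p_{r-a}$ with its faces, together with $L(\Sigma(r_L,a_L))$ and $R(\Sigma(r_R,a_R))$. The weighted blow-up of a fan at the ray through a lattice point $p$ is its star subdivision at $p$: each cone containing $p$ is replaced by the cones spanned by $p$ and the faces of that cone not containing $p$. *)

From HB Require Import structures.
From mathcomp Require Import all_boot all_order all_algebra.
From mathcomp Require Import boolp classical_sets.
Set Implicit Arguments. Unset Strict Implicit. Unset Printing Implicit Defensive.
Import Order.TTheory GRing.Theory Num.Theory.
Local Open Scope ring_scope.
Local Open Scope classical_set_scope.

(* Points of Q^3 (the ambient space of N(r,a) ⊗ Q) *)
Definition vec := 'rV[rat]_3.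

Definition mk3 (x y z : rat) : vec := \row_(j < 3) [:: x; y; z]`_j.

Definition e1 : vec := mk3 1 0 0.
Definition e2 : vec := mk3 0 1 0.
Definition e3 : vec := mk3 0 0 1.

Definition dot (u x : vec) : rat := \sum_(j < 3) u 0 j * x 0 j.

Definition cone (s : seq vec) : set vec :=
  [set x | exists c : 'I_(size s) -> rat,
      (forall i, 0 <= c i) /\ x = \sum_(i < size s) c i *: s`_i].

Definition is_face (sigma F : set vec) : Prop :=
  exists u : vec, (forall x, sigma x -> 0 <= dot u x) /\
                  F = sigma `&` [set x | dot u x = 0].

Definition fan_of_cone (sigma : set vec) : set (set vec) := [set F | is_face sigma F].

Definition join (p : vec) (F : set vec) : set vec :=
  [set x | exists t y, 0 <= t /\ F y /\ x = t *: p + y].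

Definition star (S : set (set vec)) (p : vec) : set (set vec) :=
  [set tau | S tau /\ ~ tau p] `|`
  [set tau | exists sigma F, [/\ S sigma, sigma p, is_face sigma F, ~ F p &
                                 tau = join p F]].

Definition fan_image (f : vec -> vec) (S : set (set vec)) : set (set vec) :=
  (fun sigma => f @` sigma) @` S.

Definition Delta : set vec := cone [:: e1; e2; e3].

(* p_{r-a} = 1/r (1, a, r-a) *)
Definition qpt (r a : nat) : vec :=
  (r%:R : rat)^-1 *: mk3 1 a%:R (r - a)%:R.

Definition Lmap (r a : nat) (x : vec) : vec :=
  x 0 0 *: e1 + x 0 1 *: e2 + x 0 2 *: qpt r a.
Definition Rmap (r a : nat) (x : vec) : vec :=
  x 0 0 *: e1 + x 0 1 *: qpt r a + x 0 2 *: e3.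

(* Danilov fan, by recursion on r (fuel n >= r suffices for admissible (r,a)). *)
Fixpoint danilov_fuel (n r a : nat) : set (set vec) :=
  match n with
  | 0 => set0
  | n'.+1 =>
    if (r <= 1)%N then fan_of_cone (cone [:: e1; e2; e3])
    else fan_of_cone (cone [:: e2; e3; qpt r a])
         `|` fan_image (Lmap r a) (danilov_fuel n' (r - a) (r %% (r - a)))
         `|` fan_image (Rmap r a) (danilov_fuel n' a ((a - r %% a) %% a))
  end.

Definition danilov (r a : nat) : set (set vec) := danilov_fuel r r a.

(* p_i = 1/r (<-ib>_r, r-i, i), b an inverse of a modulo r *)
Definition pt (r : nat) (b : int) (i : nat) : vec :=
  (r%:R : rat)^-1 *:
    mk3 ((((- (i%:Z * b)) %% r%:Z)%Z)%:~R) (r - i)%:R i%:R.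

(* Star subdividing the positive orthant at a positive vector q yields the three
   simplicial cones obtained by replacing one standard basis vector by q; for
   q = p_(r-1) these are cone(e2, e3, q), L(Delta) and R(Delta), the top level of the
   recursion defining Sigma(r, 1). Star subdivision commutes with linear automorphisms
   and with adding cones that avoid the centre. The later centres p_(r-2), ..., p_1 lie
   in L(Delta) only and are the L-images of the centres of Sigma(r-1, 1), so induction
   on r gives the case a = 1. Swapping the last two coordinates maps Sigma(r, 1) onto
   Sigma(r, r-1) and the centres of one sequence onto those of the other. *)

From HB Require Import structures.
From mathcomp Require Import all_boot all_order all_algebra perm.
From mathcomp Require Import boolp classical_sets.
From mathcomp Require Import ring zify.
Import Order.TTheory GRing.Theory Num.Theory.
Local Open Scope ring_scope.
Local Open Scope classical_set_scope.

Implicit Types (u x p q : vec) (sigma F : set vec) (S : set (set vec)).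

Lemma ord3P (j : 'I_3) : [\/ j = 0, j = 1 | j = 2].
Proof.
by case: j => [[|[|[|//]]] ?]; [constructor 1|constructor 2|constructor 3]; apply/val_inj.
Qed.

Lemma vec3_eq (u v : vec) : u 0 0 = v 0 0 -> u 0 1 = v 0 1 -> u 0 2 = v 0 2 -> u = v.
Proof. by move=> e0 e1 e2; apply/rowP => j; case: (ord3P j) => ->. Qed.

Lemma dotE u x : dot u x = (x *m u^T) 0 0.
Proof. by rewrite /dot mxE; apply: eq_bigr => j _; rewrite mxE mulrC. Qed.

Lemma dot_delta u i : dot u (delta_mx 0 i) = u 0 i.
Proof. by rewrite dotE -rowE !mxE. Qed.

Lemma dot_linear (h : {linear vec -> vec}) u x :
  dot u (h x) = dot (u *m (lin1_mx h)^T) x.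
Proof. by rewrite -mul_rV_lin1 !dotE trmx_mul trmxK mulmxA. Qed.

Lemma imageK (T U : Type) (f : T -> U) (g : U -> T) (A : set T) :
  cancel f g -> g @` (f @` A) = A.
Proof. by move=> fK; rewrite image_comp; apply: eq_image_id => x _ /=; rewrite fK. Qed.

Lemma fan_imageK {f g : vec -> vec} {S} :
  cancel f g -> fan_image g (fan_image f S) = S.
Proof. by move=> fK; apply: imageK => sigma; exact: imageK. Qed.

Lemma face_sub sigma F : is_face sigma F -> F `<=` sigma.
Proof. by case=> u [_ ->] x []. Qed.

Lemma face_image {f g : {linear vec -> vec}} {sigma F} : cancel f g ->
  is_face sigma F -> is_face (f @` sigma) (f @` F).
Proof.
move=> fK [u [u_ge0 ->]]; set u' := u *m (lin1_mx g)^T.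
have u'E x : dot u' (f x) = dot u x by rewrite -dot_linear fK.
exists u'; split=> [_ [x sx <-]|]; first by rewrite u'E; exact: u_ge0.
apply/seteqP; split=> [_ [x [sx ux] <-]|_ [[x sx <-]]]; rewrite /= ?u'E.
- by split; [exists x|].
- by move=> ux; exists x.
Qed.

Lemma join_image (f : {linear vec -> vec}) p F : f @` join p F = join (f p) (f @` F).
Proof.
apply/seteqP; split=> [_ [_ [t [y [t_ge0 [Fy ->]]]] <-]|_ [t [_ [t_ge0 [[y Fy <-] ->]]]]].
- by exists t, (f y); rewrite linearP; split=> //; split=> //; exists y.
- by exists (t *: p + y); [exists t, y | rewrite linearP].
Qed.

Lemma star_image_sub {f g : {linear vec -> vec}} {S p} : cancel f g ->
  fan_image f (star S p) `<=` star (fan_image f S) (f p).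
Proof.
move=> fK; have f_inj := can_inj fK.
move=> _ [tau [[Stau taup]|[sigma [F [Ssigma sigmap sF Fp ->]]]] <-].
- by left; split; [exists tau | rewrite image_inj].
- right; exists (f @` sigma), (f @` F); split.
  + by exists sigma.
  + exact: imageP.
  + exact: face_image fK sF.
  + by rewrite image_inj.
  + by rewrite join_image.
Qed.

Section LinearBijection.
Context {f g : {linear vec -> vec}}.
Hypotheses (fK : cancel f g) (gK : cancel g f).

Lemma fan_of_cone_image sigma :
  fan_of_cone (f @` sigma) = fan_image f (fan_of_cone sigma).
Proof.
apply/seteqP; split=> [F' fF'|_ [F sF <-]]; last exact: face_image fK sF.
exists (g @` F'); last exact: imageK.
by have := face_image gK fF'; rewrite imageK.
Qed.

Lemma star_image S p : star (fan_image f S) (f p) = fan_image f (star S p).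
Proof.
apply/seteqP; split; last exact: star_image_sub.
rewrite -[X in X `<=` _](fan_imageK gK); apply: image_subset.
by apply: subset_trans (star_image_sub gK) _; rewrite fan_imageK // fK.
Qed.

Lemma foldl_star_image S ps :
  foldl star (fan_image f S) (map f ps) = fan_image f (foldl star S ps).
Proof. by elim: ps S => //= p ps IH S; rewrite star_image IH. Qed.

End LinearBijection.

Definition fan_support S : set vec := \bigcup_(tau in S) tau.

Lemma fan_support_image (f : vec -> vec) sigma :
  fan_support (fan_image f (fan_of_cone sigma)) `<=` f @` sigma.
Proof. by move=> _ [_ [F /face_sub Fs <-] [x Fx <-]]; exists x => //; exact: Fs. Qed.

Lemma star_setUl A B p : ~ fan_support A p -> star (A `|` B) p = A `|` star B p.
Proof.
move=> Ap; apply/seteqP; split=> tau.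
- case=> [[[Atau|Btau] taup]|[sigma [F [[Asigma|Bsigma] sigmap sF Fp ->]]]].
  + by left.
  + by right; left.
  + by case: Ap; exists sigma.
  + by right; right; exists sigma, F.
- case=> [Atau|[[Btau taup]|[sigma [F [Bsigma sigmap sF Fp ->]]]]].
  + by left; split; [left | move=> taup; apply: Ap; exists tau].
  + by left; split; [right|].
  + by right; exists sigma, F; split=> //; right.
Qed.

Lemma star_setUr A B p : ~ fan_support B p -> star (A `|` B) p = star A p `|` B.
Proof. by move=> Bp; rewrite setUC star_setUl // setUC. Qed.

Lemma foldl_star_setU X T Y ps :
  (forall p, p \in ps -> ~ fan_support X p /\ ~ fan_support Y p) ->
  foldl star (X `|` T `|` Y) ps = X `|` foldl star T ps `|` Y.
Proof.
elim: ps T => //= p ps IH T avoid; have [Xp Yp] := avoid p (mem_head _ _).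
rewrite star_setUr // star_setUl // IH // => p' p'ps.
by apply: avoid; rewrite in_cons p'ps orbT.
Qed.

Definition orthant : set vec := [set x | forall i, 0 <= x 0 i].

Definition coord_face (Z : {set 'I_3}) : set vec :=
  orthant `&` [set x | forall i, i \in Z -> x 0 i = 0].

Lemma coord_face0 : coord_face finset.set0 = orthant.
Proof. by apply/seteqP; split=> [x []//|x x_ge0]; split=> // i; rewrite inE. Qed.

Lemma coord_face_pos {Z q} : (forall i, 0 < q 0 i) -> coord_face Z q -> Z = finset.set0.
Proof.
move=> q_gt0 [_ qZ]; apply/setP => i; rewrite inE; apply/negP => /qZ qi0.
by move: (q_gt0 i); rewrite qi0 ltxx.
Qed.

Lemma dot_orthant_eq0 {u x} : orthant u -> orthant x ->
  dot u x = 0 <-> (forall i, u 0 i != 0 -> x 0 i = 0).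
Proof.
move=> u_ge0 x_ge0; have ux_ge0 i (_ : true) : 0 <= u 0 i * x 0 i by rewrite mulr_ge0.
split=> [/(psumr_eq0P ux_ge0) ux0 i ui0|ux0].
  by apply/eqP; move: (ux0 i isT) => /eqP; rewrite mulf_eq0 (negPf ui0).
by rewrite /dot big1 // => i _; have [->|/ux0->] := eqVneq (u 0 i) 0; rewrite ?mul0r ?mulr0.
Qed.

Lemma is_face_coord_face Z : is_face orthant (coord_face Z).
Proof.
pose u : vec := \row_i (i \in Z)%:R.
have u_ge0 : orthant u by move=> i; rewrite mxE ler0n.
exists u; split=> [x x_ge0|]; first by rewrite /dot sumr_ge0 // => i _; rewrite mulr_ge0.
apply/seteqP; split=> x [x_ge0 xZ]; split=> //=.
- apply: (dot_orthant_eq0 u_ge0 x_ge0).2 => i; rewrite mxE.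
  by case: (boolP (i \in Z)) => [/xZ//|_]; rewrite eqxx.
- move=> i iZ; apply: ((dot_orthant_eq0 u_ge0 x_ge0).1 xZ).
  by rewrite mxE iZ oner_neq0.
Qed.

Lemma face_orthant F : is_face orthant F -> exists Z, F = coord_face Z.
Proof.
case=> u [u_supp ->]; exists [set i | u 0 i != 0]%SET.
have u_ge0 : orthant u.
  by move=> i; rewrite -dot_delta; apply: u_supp => j; rewrite mxE ler0n.
apply/seteqP; split=> x [x_ge0].
- move/(dot_orthant_eq0 u_ge0 x_ge0) => ux0; split=> // i; rewrite inE; exact: ux0.
- move=> xZ; split=> //; apply: (dot_orthant_eq0 u_ge0 x_ge0).2 => i ui0.
  by apply: xZ; rewrite inE.
Qed.

Lemma fan_image_orthantP (f : vec -> vec) tau :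
  fan_image f (fan_of_cone orthant) tau <-> exists Z, tau = f @` coord_face Z.
Proof.
split=> [[F /face_orthant [Z ->] <-]|[Z ->]]; first by exists Z.
by exists (coord_face Z); first exact: is_face_coord_face.
Qed.

Definition exch (k : 'I_3) q x : vec := x + x 0 k *: (q - delta_mx 0 k).

Lemma exch_is_linear k q : linear (exch k q).
Proof. by move=> a x y; apply/rowP => j; rewrite /exch !mxE; ring. Qed.
HB.instance Definition _ k q :=
  GRing.isLinear.Build rat vec vec *:%R (exch k q) (exch_is_linear k q).

Definition exch_inv (k : 'I_3) q :=
  exch k (delta_mx 0 k - (q 0 k)^-1 *: (q - delta_mx 0 k)).

Lemma exchK {k q} : q 0 k != 0 -> cancel (exch k q) (exch_inv k q).
Proof. by move=> qk x; apply/rowP => j; rewrite /exch_inv /exch !mxE !eqxx /=; field. Qed.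

Lemma exch_invK {k q} : q 0 k != 0 -> cancel (exch_inv k q) (exch k q).
Proof. by move=> qk x; apply/rowP => j; rewrite /exch_inv /exch !mxE !eqxx /=; field. Qed.

Lemma exch_coord_face k q Z : exch k q @` coord_face Z =
  if k \in Z then coord_face Z else join q (coord_face (k |: Z)).
Proof.
case: ifP => kZ.
  by apply: eq_image_id => x [_ xZ]; rewrite /exch xZ // scale0r addr0.
apply/seteqP; split=> [_ [x [x_ge0 xZ] <-]|_ [t [y [t_ge0 [[y_ge0 yZ] ->]]]]].
- exists (x 0 k), (x - x 0 k *: delta_mx 0 k); split; first exact: x_ge0.
  split; last by apply/rowP => j; rewrite !mxE; ring.
  split=> i; rewrite !mxE /=; have [->|ik] := eqVneq i k;
    rewrite /= ?mulr1n ?mulr0n ?mulr1 ?mulr0 ?subrr ?subr0 //.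
  by rewrite in_setU1 (negPf ik); exact: xZ.
- have yk : y 0 k = 0 by apply: yZ; rewrite setU11.
  exists (y + t *: delta_mx 0 k).
    split=> i; rewrite !mxE /=; have [->|ik] := eqVneq i k;
      rewrite /= ?mulr1n ?mulr0n ?mulr1 ?mulr0 ?addr0 ?yk ?add0r ?kZ //.
    by move=> iZ; rewrite yZ // in_setU1 iZ orbT.
  by apply/rowP => j; rewrite /exch !mxE !eqxx yk /=; ring.
Qed.

Lemma star_orthantP {q tau} : (forall i, 0 < q 0 i) ->
  star (fan_of_cone orthant) q tau <-> exists k Z, tau = exch k q @` coord_face Z.
Proof.
move=> q_gt0; have q_ge0 : orthant q by move=> i; exact: ltW.
have nonempty Z : ~ coord_face Z q -> exists k, k \in Z.
  move=> Zq; have [k kZ|Z0] := pickP (mem Z); first by exists k.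
  by case: Zq; split=> // i; rewrite [i \in Z]Z0.
split.
- case=> [[/face_orthant [Z ->] Zq]|[_ [F [/face_orthant [Z ->] Zq sF Fq ->]]]].
    have [k kZ] := nonempty Z Zq.
    by exists k, Z; rewrite exch_coord_face kZ.
  move: sF; rewrite (coord_face_pos q_gt0 Zq) coord_face0 => /face_orthant [Z' FZ'].
  move: Fq; rewrite FZ' => /nonempty [k kZ'].
  by exists k, (Z' :\ k)%SET; rewrite exch_coord_face setD11 finset.setD1K.
- case=> k [Z ->]; rewrite exch_coord_face; case: ifP => kZ.
    left; split; first exact: is_face_coord_face.
    by move/(coord_face_pos q_gt0)/setP/(_ k); rewrite kZ inE.
  right; exists orthant, (coord_face (k |: Z)); split=> //.
  + by have := is_face_coord_face finset.set0; rewrite coord_face0.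
  + exact: is_face_coord_face.
  + by move/(coord_face_pos q_gt0)/setP/(_ k); rewrite setU11 inE.
Qed.

Lemma star_orthant q : (forall i, 0 < q 0 i) ->
  star (fan_of_cone orthant) q =
    fan_image (exch 0 q) (fan_of_cone orthant) `|`
    fan_image (exch 2 q) (fan_of_cone orthant) `|`
    fan_image (exch 1 q) (fan_of_cone orthant).
Proof.
move=> q_gt0; apply/seteqP; split=> tau.
  move/(star_orthantP q_gt0) => [k [Z ->]].
  by case: (ord3P k) => ->; [left; left | right | left; right];
    apply/fan_image_orthantP; exists Z.
by move=> [[|]|] /fan_image_orthantP [Z ->]; apply/(star_orthantP q_gt0); eexists _, Z.
Qed.

Lemma cone3E (u v w : vec) :
  cone [:: u; v; w] = (fun x => x 0 0 *: u + x 0 1 *: v + x 0 2 *: w) @` orthant.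
Proof.
have sum3 (c : 'I_3 -> vec) : \sum_(i < 3) c i = c 0 + c 1 + c 2.
  by rewrite !big_ord_recl big_ord0 addr0 addrA; congr (c _ + c _ + c _); apply/val_inj.
apply/seteqP; split=> y.
- by case=> c [c_ge0 ->]; exists (\row_i c i) => [i|]; rewrite !mxE ?sum3.
- by case=> x x_ge0 <-; exists (fun i => x 0 i); rewrite sum3.
Qed.

Lemma Delta_orthant : Delta = orthant.
Proof.
by rewrite /Delta cone3E; apply: eq_image_id => x _; apply: vec3_eq; rewrite !mxE /=; ring.
Qed.

Lemma cone_e2e3 q : cone [:: e2; e3; q] = exch 0 q @` orthant.
Proof.
rewrite cone3E; apply/seteqP; split=> _ [x x_ge0 <-].
- exists (mk3 (x 0 2) (x 0 0) (x 0 1)); last by apply: vec3_eq; rewrite !mxE /=; ring.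
  by move=> i; case: (ord3P i) => ->; rewrite mxE; apply: x_ge0.
- exists (mk3 (x 0 1) (x 0 2) (x 0 0)); last by apply: vec3_eq; rewrite !mxE /=; ring.
  by move=> i; case: (ord3P i) => ->; rewrite mxE; apply: x_ge0.
Qed.

Lemma Lmap_exch r a : Lmap r a = exch 2 (qpt r a).
Proof. by apply/funext => x; apply: vec3_eq; rewrite !mxE /=; ring. Qed.

Lemma Rmap_exch r a : Rmap r a = exch 1 (qpt r a).
Proof. by apply/funext => x; apply: vec3_eq; rewrite !mxE /=; ring. Qed.

Lemma qpt_gt0 r a : (0 < a < r)%N -> forall i, 0 < qpt r a 0 i.
Proof.
case/andP=> a_gt0 ar i; rewrite !mxE.
apply: mulr_gt0; first by rewrite invr_gt0 ltr0n; lia.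
by case: (ord3P i) => ->; rewrite /= ?ltr01 // ltr0n; lia.
Qed.

Lemma danilov_fuelS n r a :
  danilov_fuel n.+1 r.+2 a =
    fan_of_cone (cone [:: e2; e3; qpt r.+2 a])
    `|` fan_image (Lmap r.+2 a) (danilov_fuel n (r.+2 - a) (r.+2 %% (r.+2 - a))%N)
    `|` fan_image (Rmap r.+2 a) (danilov_fuel n a ((a - r.+2 %% a) %% a)%N).
Proof. by []. Qed.

Lemma danilov_fuel1 n a : danilov_fuel n.+1 1 a = fan_of_cone orthant.
Proof. by rewrite -Delta_orthant. Qed.

Lemma modSSn n : (n.+3 %% n.+2 = 1)%N.
Proof. by rewrite -[n.+3]/(1 + n.+2)%N modnDr modn_small. Qed.

Lemma fan_of_cone_exch {k q} sigma : q 0 k != 0 ->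
  fan_of_cone (exch k q @` sigma) = fan_image (exch k q) (fan_of_cone sigma).
Proof. by move=> qk; apply: fan_of_cone_image; [exact: exchK | exact: exch_invK]. Qed.

Lemma danilovS_1 s :
  danilov s.+2 1 =
    fan_image (exch 0 (qpt s.+2 1)) (fan_of_cone orthant)
    `|` fan_image (exch 2 (qpt s.+2 1)) (danilov s.+1 1)
    `|` fan_image (exch 1 (qpt s.+2 1)) (fan_of_cone orthant).
Proof.
have q0 : qpt s.+2 1 0 0 != 0 by rewrite gt_eqF // qpt_gt0.
rewrite /danilov danilov_fuelS cone_e2e3 (fan_of_cone_exch _ q0) Lmap_exch Rmap_exch.
rewrite danilov_fuel1 subSS subn0.
by case: s {q0} => [|s]; [rewrite !danilov_fuel1 | rewrite modSSn].
Qed.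

Lemma danilovS_pred s :
  danilov s.+2 s.+1 =
    fan_image (exch 0 (qpt s.+2 s.+1)) (fan_of_cone orthant)
    `|` fan_image (exch 2 (qpt s.+2 s.+1)) (fan_of_cone orthant)
    `|` fan_image (exch 1 (qpt s.+2 s.+1)) (danilov s.+1 s).
Proof.
have q0 : qpt s.+2 s.+1 0 0 != 0 by rewrite gt_eqF // qpt_gt0 // ltnSn.
rewrite /danilov danilov_fuelS cone_e2e3 (fan_of_cone_exch _ q0) Lmap_exch Rmap_exch.
rewrite subSnn danilov_fuel1.
case: s {q0} => [|s]; first by rewrite !danilov_fuel1.
by rewrite modSSn subSS subn0 (modn_small (ltnSn _)).
Qed.

Lemma xcol12K : involutive (xcol 1 2 : vec -> vec).
Proof. by move=> x; rewrite /xcol -col_permM tperm2 col_perm1. Qed.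

Lemma xcol12_exch k q x :
  xcol 1 2 (exch k q x) = exch (tperm 1 2 k) (xcol 1 2 q) (xcol 1 2 x).
Proof. by apply/rowP => j; rewrite /exch !mxE tpermK (canF_eq (tpermK _ _)). Qed.

Lemma xcol12_orthant : fan_image (xcol 1 2) (fan_of_cone orthant) = fan_of_cone orthant.
Proof.
have swap_orthant : xcol 1 2 @` orthant = orthant.
  apply/seteqP; split=> [_ [x x_ge0 <-] i|x x_ge0]; first by rewrite mxE.
  by exists (xcol 1 2 x); rewrite ?xcol12K // => i; rewrite mxE.
by rewrite -[in RHS]swap_orthant (fan_of_cone_image xcol12K xcol12K).
Qed.

Lemma xcol12_qpt r a : (a <= r)%N -> xcol 1 2 (qpt r a) = qpt r (r - a).
Proof. by move=> ar; apply: vec3_eq; rewrite !mxE ?tpermL ?tpermR ?tpermD //= subKn. Qed.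

Lemma fan_image_xcol12_exch k q S :
  fan_image (xcol 1 2) (fan_image (exch k q) S) =
  fan_image (exch (tperm 1 2 k) (xcol 1 2 q)) (fan_image (xcol 1 2) S).
Proof.
rewrite /fan_image !image_comp; apply: eq_imagel => sigma _ /=.
by rewrite !image_comp; apply: eq_imagel => x _ /=; rewrite xcol12_exch.
Qed.

Lemma fan_image_setU (f : vec -> vec) A B :
  fan_image f (A `|` B) = fan_image f A `|` fan_image f B.
Proof. exact: image_setU. Qed.

Lemma danilov_pred_xcol s : danilov s.+1 s = fan_image (xcol 1 2) (danilov s.+1 1).
Proof.
elim: s => [|s IH]; first by rewrite /danilov !danilov_fuel1 xcol12_orthant.
rewrite danilovS_pred danilovS_1 !fan_image_setU !fan_image_xcol12_exch -IH xcol12_orthant.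
rewrite xcol12_qpt // subSS subn0 tpermD // tpermL tpermR.
by rewrite setUAC.
Qed.

(* For (r, a) = (n, 1) we have b = 1 and p_(n-j) = (j, j, n-j)/n = j p_(n-1) + (1-j) e3:
   the centres of the blow-ups lie on the line through e3 and p_(n-1). *)
Definition danilov_pt (n j : nat) : vec := j%:R *: qpt n 1 + (1 - j%:R) *: e3.

Lemma danilov_pt1 n : danilov_pt n 1 = qpt n 1.
Proof. by rewrite /danilov_pt scale1r subrr scale0r addr0. Qed.

Lemma exch_danilov_pt n j :
  exch 2 (qpt n.+2 1) (danilov_pt n.+1 j) = danilov_pt n.+2 j.+1.
Proof.
by apply: vec3_eq; rewrite /exch !mxE /= !subSS !subn0; field; rewrite !paddr_eq0 ?ler0n.
Qed.

Lemma danilov_pt_notin (k : 'I_3) n j : k != 2 -> (1 < j)%N ->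
  ~ (exch k (qpt n.+2 1) @` orthant) (danilov_pt n.+2 j).
Proof.
move=> k2 j_gt1; have qk : qpt n.+2 1 0 k != 0 by rewrite gt_eqF // qpt_gt0.
(* In the basis with e_k replaced by q, the point has e3-coordinate 1 - j < 0. *)
have -> : danilov_pt n.+2 j =
    exch k (qpt n.+2 1) (j%:R *: delta_mx 0 k + (1 - j%:R) *: e3).
  by apply/rowP => i; rewrite /exch /danilov_pt !mxE; case: (ord3P k) k2 => -> //= _; ring.
rewrite image_inj; last exact: can_inj (exchK qk).
move/(_ 2); rewrite !mxE eq_sym (negPf k2) /= mulr0 add0r mulr1 subr_ge0 lern1; lia.
Qed.

Lemma danilov_1_blowups s :
  danilov s.+1 1 =
    foldl star (fan_of_cone orthant) [seq danilov_pt s.+1 j | j <- iota 1 s].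
Proof.
elim: s => [|s IH]; first by rewrite /danilov danilov_fuel1.
set q := qpt s.+2 1.
have q_gt0 : forall i, 0 < q 0 i by exact: qpt_gt0.
have q2 : q 0 2 != 0 by rewrite gt_eqF.
rewrite [iota 1 s.+1]/= map_cons /= danilov_pt1 star_orthant // foldl_star_setU; last first.
  move=> p /mapP [j]; rewrite mem_iota => /andP [j_gt1 _] ->.
  by split; move/fan_support_image; apply: danilov_pt_notin.
rewrite (iotaDl 1 1) -map_comp (eq_map (fun j => esym (exch_danilov_pt s j))) map_comp.
by rewrite (foldl_star_image (exchK q2) (exch_invK q2)) danilovS_1 IH.
Qed.

Lemma pt_a1 r b j : (1 < r)%N -> (1 * b = 1 %[mod r%:Z])%Z -> (0 < j < r)%N ->
  pt r b (r - j) = danilov_pt r j.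
Proof.
move=> r_gt1 b1 /andP [j_gt0 jr].
have b_mod : (b %% r%:Z)%Z = 1 by rewrite -[b]mul1r b1 modz_small // ltz_nat.
have jE : ((- ((r - j)%N%:Z * b)) %% r%:Z)%Z = j%:Z.
  rewrite -mulNr -modzMmr b_mod mulr1 -subzn ?(ltnW jr) // opprB.
  by rewrite -(modzDr _ r%:Z) subrK modz_small // ltz_nat jr.
have r0 : r%:R != 0 :> rat by rewrite pnatr_eq0 -lt0n ltnW.
rewrite /pt jE subKn ?(ltnW jr) // -pmulrn.
by apply: vec3_eq; rewrite !mxE /= ?natrB ?(ltnW jr) ?(ltnW r_gt1) //; field.
Qed.

Lemma pt_a_pred r b j :
    (1 < r)%N -> ((r - 1)%:Z * b = 1 %[mod r%:Z])%Z -> (0 < j < r)%N ->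
  pt r b j = xcol 1 2 (danilov_pt r j).
Proof.
move=> r_gt1 b1 /andP [j_gt0 jr].
have nb_mod : ((- b) %% r%:Z)%Z = 1.
  have -> : - b = (- b) * r%:Z + (r - 1)%N%:Z * b.
    by rewrite -subzn ?(ltnW r_gt1) //; ring.
  by rewrite modzMDl b1 modz_small // ltz_nat.
have jE : ((- (j%:Z * b)) %% r%:Z)%Z = j%:Z.
  by rewrite -mulrN -modzMmr nb_mod mulr1 modz_small // ltz_nat jr.
have r0 : r%:R != 0 :> rat by rewrite pnatr_eq0 -lt0n ltnW.
rewrite /pt jE -pmulrn; apply: vec3_eq; rewrite !mxE ?tpermL ?tpermR ?tpermD //=.
all: by rewrite ?natrB ?(ltnW jr) ?(ltnW r_gt1) //; field.
Qed.

Local Close Scope classical_set_scope.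
Local Close Scope ring_scope.

Theorem mainTheorem2 (r : nat) : (1 < r)%N ->
  (forall b : int, (1 * b = 1 %[mod r%:Z])%Z ->
     danilov r 1 =
     foldl star (fan_of_cone Delta) [seq pt r b (r - i) | i <- iota 1 r.-1]) /\
  (forall b : int, ((r - 1)%:Z * b = 1 %[mod r%:Z])%Z ->
     danilov r (r - 1) =
     foldl star (fan_of_cone Delta) [seq pt r b i | i <- iota 1 r.-1]).
Proof.
case: r => [|[|s]] // r_gt1; rewrite Delta_orthant; split=> b b_inv.
- rewrite danilov_1_blowups; congr (foldl _ _ _); apply/eq_in_map => j.
  by rewrite mem_iota => j_range; apply: esym; apply: pt_a1 => //; lia.
- rewrite subn1 danilov_pred_xcol danilov_1_blowups -(foldl_star_image xcol12K xcol12K).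
  rewrite xcol12_orthant -map_comp; congr (foldl _ _ _); apply/eq_in_map => j.
  by rewrite mem_iota => j_range; apply: esym; apply: pt_a_pred => //; lia.
Qed.
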